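(* Let $\widetilde V$ be a real Hilbert space with inner product $M(\cdot,\cdot)$ and norm $\|\cdot\|_M$. Let $N(\cdot,\cdot)$ be a symmetric positive semi-definite bilinear form on $\widetilde V$ with seminorm $\|\cdot\|_N$, and assume $\|\cdot\|_N$ is compact with respect to $\|\cdot\|_M$ (every $\|\cdot\|_M$-bounded sequence in $\widetilde V$ has a subsequence that is Cauchy in $\|\cdot\|_N$). Let $V$ and $V_h$ be closed linear subspaces of $\widetilde V$, with $V_h$ finite-dimensional. Let $\lambda_1\le\lambda_2\le\cdots$ ($d$ of them, $d\in\mathbb N\cup\{\infty\}$) and $0<\lambda_{h,1}\le\cdots\le\lambda_{h,n}$ be the eigenvalues defined in the context, and let $P_h:\widetilde V\to V_h$ be the $M$-orthogonal projection. Suppose there exists a positive constant $C_h$ such that $$\|u-P_hu\|_N\le C_h\|u-P_hu\|_M\quad\forall u\in V.$$ Then $$\lambda_k\ge\frac{\lambda_{h,k}}{1+C_h^2\lambda_{h,k}},\qquad k=1,2,\ldots,\min(n,d).$$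
   Context: Define $\mathcal K:V\to V$ by $M(\mathcal Kf,v)=N(f,v)$ for all $v\in V$; then $\mathrm{Ker}(\mathcal K)=\{v\in V: N(v,v)=0\}$. Let $\mathrm{Ker}(\mathcal K)^\perp$ be its $M$-orthogonal complement in $V$ and $d=\dim \mathrm{Ker}(\mathcal K)^\perp$ (possibly infinite). The eigenvalues $\lambda_k$ ($k=1,\ldots,d$, increasing, repeated according to multiplicity) are those of the problem: find $(\lambda,u)\in\mathbb R\times \mathrm{Ker}(\mathcal K)^\perp$ with $M(u,v)=\lambda N(u,v)$ for all $v\in\mathrm{Ker}(\mathcal K)^\perp$ (equivalently $\lambda_k=\mu_k^{-1}$ where $\mu_1\ge\mu_2\ge\cdots>0$ are the nonzero eigenvalues of the compact self-adjoint operator $\mathcal K$). Analogously, $\mathrm{Ker}(\mathcal K_h)=\{v_h\in V_h:N(v_h,v_h)=0\}$, $\mathrm{Ker}(\mathcal K_h)^\perp$ is its $M$-orthogonal complement in $V_h$, $n=\dim\mathrm{Ker}(\mathcal K_h)^\perp$, and $0<\lambda_{h,1}\le\cdots\le\lambda_{h,n}$ are the eigenvalues of: find $(\lambda_h,u_h)\in\mathbb R\times\mathrm{Ker}(\mathcal K_h)^\perp$ with $M(u_h,v_h)=\lambda_hN(u_h,v_h)$ for all $v_h\in\mathrm{Ker}(\mathcal K_h)^\perp$. The projection $P_h$ is defined by $M(u-P_hu,v_h)=0$ for all $v_h\in V_h$. *)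

From HB Require Import structures.
From mathcomp Require Import all_boot all_order all_algebra.
From mathcomp Require Import reals.
Set Implicit Arguments. Unset Strict Implicit. Unset Printing Implicit Defensive.
Import Order.TTheory GRing.Theory Num.Theory.
Local Open Scope ring_scope.

Section Defs.
Variables (R : realType) (T : lmodType R).

Definition sym_bilinear (B : T -> T -> R) : Prop :=
  (forall x y, B x y = B y x) /\
  (forall (a : R) x y z, B (a *: x + y) z = a * B x z + B y z).

Definition bnorm (B : T -> T -> R) (x : T) : R := Num.sqrt (B x x).

Definition inner_product (M : T -> T -> R) : Prop :=
  sym_bilinear M /\ (forall x, x != 0 -> 0 < M x x).

Definition psd_form (N : T -> T -> R) : Prop :=
  sym_bilinear N /\ (forall x, 0 <= N x x).

Definition cauchy_seq (B : T -> T -> R) (u : nat -> T) : Prop :=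
  forall e : R, 0 < e -> exists K : nat, forall m k, (K <= m)%N -> (K <= k)%N ->
    bnorm B (u m - u k) < e.

Definition converges_to (B : T -> T -> R) (u : nat -> T) (x : T) : Prop :=
  forall e : R, 0 < e -> exists K : nat, forall m, (K <= m)%N -> bnorm B (u m - x) < e.

Definition hilbert (M : T -> T -> R) : Prop :=
  inner_product M /\
  (forall u, cauchy_seq M u -> exists x, converges_to M u x).

Definition compact_wrt (N M : T -> T -> R) : Prop :=
  forall u : nat -> T, (exists c : R, forall k, bnorm M (u k) <= c) ->
    exists phi : nat -> nat, (forall k, (phi k < phi k.+1)%N) /\
      cauchy_seq N (fun k => u (phi k)).

Definition subspace (V : T -> Prop) : Prop :=
  V 0 /\ (forall (a : R) x y, V x -> V y -> V (a *: x + y)).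

Definition closed_subspace (M : T -> T -> R) (V : T -> Prop) : Prop :=
  subspace V /\ (forall u x, (forall k, V (u k)) -> converges_to M u x -> V x).

Definition lin_indep (m : nat) (f : 'I_m -> T) : Prop :=
  forall c : 'I_m -> R, \sum_(i < m) c i *: f i = 0 -> forall i, c i = 0.

Definition has_indep (S : T -> Prop) (m : nat) : Prop :=
  exists f : 'I_m -> T, (forall i, S (f i)) /\ lin_indep f.

Definition dim_eq (S : T -> Prop) (m : nat) : Prop :=
  has_indep S m /\ ~ has_indep S m.+1.

Definition finite_dim (S : T -> Prop) : Prop := exists m, dim_eq S m.

(* d : option nat is a dimension in N \cup {oo}; None = infinity *)
Definition dim_ext (S : T -> Prop) (d : option nat) : Prop :=
  match d with Some m => dim_eq S m | None => forall m, has_indep S m end.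

Definition ltd (k : nat) (d : option nat) : Prop :=
  match d with Some m => (k < m)%N | None => True end.

Definition is_K (M N : T -> T -> R) (V : T -> Prop) (K : T -> T) : Prop :=
  (forall f, V f -> V (K f)) /\ (forall f v, V f -> V v -> M (K f) v = N f v).

Definition kerK (V : T -> Prop) (K : T -> T) : T -> Prop :=
  fun v => V v /\ K v = 0.

Definition kerK_perp (M : T -> T -> R) (V : T -> Prop) (K : T -> T) : T -> Prop :=
  fun u => V u /\ forall w, kerK V K w -> M u w = 0.

Definition eigspace (M N : T -> T -> R) (W : T -> Prop) (mu : R) : T -> Prop :=
  fun u => W u /\ forall v, W v -> M u v = mu * N u v.

Definition is_eigval (M N : T -> T -> R) (W : T -> Prop) (mu : R) : Prop :=
  exists u, u != 0 /\ eigspace M N W mu u.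

Definition card_eq (P : nat -> Prop) (m : nat) : Prop :=
  exists s : seq nat, uniq s /\ size s = m /\ forall k, P k <-> k \in s.

(* lam_0 <= lam_1 <= ... (indices k with ltd k d) are the eigenvalues of the
   problem on W, in increasing order, repeated according to multiplicity *)
Definition eig_enum (M N : T -> T -> R) (W : T -> Prop) (lam : nat -> R)
    (d : option nat) : Prop :=
  (forall k, ltd k d -> is_eigval M N W (lam k)) /\
  (forall k l, ltd l d -> (k <= l)%N -> lam k <= lam l) /\
  (forall mu, is_eigval M N W mu ->
     exists m, dim_eq (eigspace M N W mu) m /\
               card_eq (fun k => ltd k d /\ lam k = mu) m).

Definition is_Mproj (M : T -> T -> R) (Vh : T -> Prop) (P : T -> T) : Prop :=
  forall u, Vh (P u) /\ forall v, Vh v -> M (u - P u) v = 0.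

End Defs.

From HB Require Import structures.
From mathcomp Require Import all_boot all_order all_algebra.
From mathcomp Require Import reals.
From mathcomp Require Import ring lra.
Import Order.TTheory GRing.Theory Num.Theory.
Local Open Scope ring_scope.
Set Implicit Arguments. Unset Strict Implicit. Unset Printing Implicit Defensive.

(* Min-max argument.  Take independent eigenvectors u_0, ..., u_k of the
   continuous problem (eigenvalues lam_0 <= ... <= lam_k) and e_k, ..., e_(n-1)
   of the discrete one (eigenvalues >= lamh_k).  The k+1 vectors Kh (P u_i) and
   the n-k vectors e_j all lie in Ker(Kh)^perp, which has dimension n, so some
   nonzero x = sum_i a_i u_i has Kh (P x) in the span of the e_j.  Then
   M(x,x) <= lam_k N(x,x), while Cauchy-Schwarz for M and N transfers the
   discrete Rayleigh bound from Kh (P x) to P x: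
   lamh_k N(P x, P x) <= M(P x, P x).  Splitting x = P x + (x - P x)
   M-orthogonally, the hypothesis N(x - P x) <= Ch^2 M(x - P x) and Young's
   inequality for N with weight t = Ch^2 lamh_k give lamh_k <= lam_k (1 + t). *)

Lemma sqr_le_mul_of_quad_ge0 (R : realFieldType) (a b c : R) :
  0 <= c -> (forall t, 0 <= a - 2 * t * b + t ^+ 2 * c) -> b ^+ 2 <= a * c.
Proof.
move=> c_ge0 Hquad.
have [c0|c_neq0] := eqVneq c 0.
  rewrite c0 mulr0 in Hquad *; have [->|b_neq0] := eqVneq b 0; first by rewrite expr0n.
  have := Hquad ((a + 1) / (2 * b)).
  have -> : a - 2 * ((a + 1) / (2 * b)) * b + ((a + 1) / (2 * b)) ^+ 2 * 0 = -1.
    by field.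
  by rewrite ler0N1.
have c_gt0 : 0 < c by rewrite lt0r c_neq0.
have := Hquad (b / c).
have -> : a - 2 * (b / c) * b + (b / c) ^+ 2 * c = (a * c - b ^+ 2) / c by field.
by rewrite pmulr_lge0 ?invr_gt0 // subr_ge0.
Qed.

Section SymBilinear.
Variables (R : realType) (T : lmodType R) (B : T -> T -> R).
Hypothesis HB : sym_bilinear B.

Lemma bilin0l z : B 0 z = 0.
Proof. by have := HB.2 1 0 0 z; rewrite scale1r addr0 mul1r; lra. Qed.

Lemma bilinDl x y z : B (x + y) z = B x z + B y z.
Proof. by have := HB.2 1 x y z; rewrite scale1r mul1r. Qed.

Lemma bilinZl a x z : B (a *: x) z = a * B x z.
Proof. by have := HB.2 a x 0 z; rewrite addr0 bilin0l addr0. Qed.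

Lemma bilinBl x y z : B (x - y) z = B x z - B y z.
Proof. by rewrite bilinDl -scaleN1r bilinZl mulN1r. Qed.

Lemma bilinDr x y z : B z (x + y) = B z x + B z y.
Proof. by rewrite HB.1 bilinDl !(HB.1 z). Qed.

Lemma bilinZr a x z : B z (a *: x) = a * B z x.
Proof. by rewrite HB.1 bilinZl HB.1. Qed.

Lemma bilinBr x y z : B z (x - y) = B z x - B z y.
Proof. by rewrite HB.1 bilinBl !(HB.1 z). Qed.

Lemma bilin_suml (I : Type) (r : seq I) (P : pred I) (F : I -> T) z :
  B (\sum_(i <- r | P i) F i) z = \sum_(i <- r | P i) B (F i) z.
Proof.
apply: (big_rec2 (fun y1 y2 => B y1 z = y2)); first exact: bilin0l.
by move=> i y1 y2 _ <-; rewrite bilinDl.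
Qed.

Lemma bilin_sumr (I : Type) (r : seq I) (P : pred I) (F : I -> T) z :
  B z (\sum_(i <- r | P i) F i) = \sum_(i <- r | P i) B z (F i).
Proof. by rewrite HB.1 bilin_suml; apply: eq_bigr => i _; rewrite HB.1. Qed.

Lemma bilin_comb p (a b : 'I_p -> R) (e f : 'I_p -> T) :
  B (\sum_i a i *: e i) (\sum_j b j *: f j) =
  \sum_i \sum_j a i * b j * B (e i) (f j).
Proof.
rewrite bilin_suml; apply: eq_bigr => i _; rewrite bilinZl bilin_sumr big_distrr.
by apply: eq_bigr => j _; rewrite /= bilinZr mulrA.
Qed.

Lemma bilin_sqrD x y : B (x + y) (x + y) = B x x + 2 * B x y + B y y.
Proof. by rewrite bilinDl !bilinDr (HB.1 y x); ring. Qed.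

Lemma bilin_sqrB_scale t x y :
  B (x - t *: y) (x - t *: y) = B x x - 2 * t * B x y + t ^+ 2 * B y y.
Proof. by rewrite bilinBl !bilinBr !bilinZl !bilinZr (HB.1 y x); ring. Qed.

Hypothesis B_ge0 : forall x, 0 <= B x x.

Lemma bilin_cauchy_schwarz x y : B x y ^+ 2 <= B x x * B y y.
Proof. by apply: sqr_le_mul_of_quad_ge0 => // t; rewrite -bilin_sqrB_scale. Qed.

Lemma bilin_young t x y : 0 < t ->
  B (x + y) (x + y) <= (1 + t) * B x x + (1 + t^-1) * B y y.
Proof.
move=> t_gt0; rewrite bilin_sqrD.
have := B_ge0 (y - t *: x); rewrite bilin_sqrB_scale (HB.1 y x) => Hsq.
have tinv : t * t^-1 = 1 by rewrite mulfV ?gt_eqF.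
suff : t * (2 * B x y) <= t * (t * B x x + t^-1 * B y y) by rewrite ler_pM2l //; lra.
rewrite mulrDr !mulrA tinv mul1r; nra.
Qed.

End SymBilinear.

Section Subspace.
Variables (R : realType) (T : lmodType R) (V : T -> Prop).
Hypothesis HV : subspace V.

Lemma subspaceD x y : V x -> V y -> V (x + y).
Proof. by move=> Vx Vy; have := HV.2 1 x y Vx Vy; rewrite scale1r. Qed.

Lemma subspaceZ a x : V x -> V (a *: x).
Proof. by move=> Vx; have := HV.2 a x 0 Vx HV.1; rewrite addr0. Qed.

Lemma subspaceB x y : V x -> V y -> V (x - y).
Proof. by move=> Vx Vy; rewrite -scaleN1r; apply: subspaceD => //; apply: subspaceZ. Qed.

Lemma subspace_sum (I : Type) (r : seq I) (P : pred I) (F : I -> T) :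
  (forall i, P i -> V (F i)) -> V (\sum_(i <- r | P i) F i).
Proof.
move=> VF; apply: (big_rec (fun y => V y)); first exact: HV.1.
by move=> i y Pi Vy; apply: subspaceD => //; apply: VF.
Qed.

Lemma subspace_comb p (a : 'I_p -> R) (x : 'I_p -> T) :
  (forall i, V (x i)) -> V (\sum_i a i *: x i).
Proof. by move=> Vx; apply: subspace_sum => i _; apply: subspaceZ. Qed.

End Subspace.

Section InnerProduct.
Variables (R : realType) (T : lmodType R) (M : T -> T -> R).
Hypothesis HM : inner_product M.

Lemma inner_product_ge0 x : 0 <= M x x.
Proof.
have [->|x_neq0] := eqVneq x 0; first by rewrite (bilin0l HM.1).
exact: ltW (HM.2 x x_neq0).
Qed.

Lemma inner_product_eq0 x : M x x = 0 -> x = 0.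
Proof. by move=> Mx0; apply/eqP; apply: contraT => /HM.2; rewrite Mx0 ltxx. Qed.

End InnerProduct.

Section Riesz.
Variables (R : realType) (T : lmodType R) (M N : T -> T -> R) (V : T -> Prop).
Hypotheses (HM : inner_product M) (HN : psd_form N) (HV : subspace V).

Lemma Mproj_eq P u v : is_Mproj M V P ->
  V v -> (forall w, V w -> M (u - v) w = 0) -> P u = v.
Proof.
move=> HP Vv Horth; apply/eqP; rewrite -subr_eq0; apply/eqP.
apply: (inner_product_eq0 HM).
have VD : V (P u - v) by apply: subspaceB => //; exact: (HP u).1.
have eD : P u - v = (u - v) - (u - P u).
  by rewrite [RHS]addrC opprB addrA subrK.
by rewrite {1}eD (bilinBl HM.1) Horth // (HP u).2 // subr0.
Qed.

Lemma Mproj_comb P p (a : 'I_p -> R) (x : 'I_p -> T) : is_Mproj M V P ->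
  P (\sum_i a i *: x i) = \sum_i a i *: P (x i).
Proof.
move=> HP; apply: Mproj_eq => //; first by apply: subspace_comb => // i; exact: (HP _).1.
move=> w Vw; rewrite -sumrB (bilin_suml HM.1) big1 // => i _.
by rewrite -scalerBr (bilinZl HM.1) (HP _).2 ?mulr0.
Qed.

Lemma is_K_eq K f g : is_K M N V K ->
  V f -> V g -> (forall w, V w -> M g w = N f w) -> K f = g.
Proof.
move=> HK Vf Vg Hg; apply/eqP; rewrite -subr_eq0; apply/eqP.
apply: (inner_product_eq0 HM).
have VD : V (K f - g) by apply: subspaceB => //; exact: HK.1.
by rewrite (bilinBl HM.1) HK.2 // Hg // subrr.
Qed.

Lemma is_K_comb K p (a : 'I_p -> R) (x : 'I_p -> T) : is_K M N V K ->
  (forall i, V (x i)) -> K (\sum_i a i *: x i) = \sum_i a i *: K (x i).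
Proof.
move=> HK Vx; apply: is_K_eq => //.
- exact: subspace_comb.
- by apply: subspace_comb => // i; exact: HK.1.
move=> w Vw; rewrite (bilin_suml HM.1) (bilin_suml HN.1); apply: eq_bigr => i _.
by rewrite (bilinZl HM.1) (bilinZl HN.1) HK.2.
Qed.

Lemma is_K_perp K f : is_K M N V K -> V f -> kerK_perp M V K (K f).
Proof.
move=> HK Vf; split; first exact: HK.1.
by move=> w [Vw Kw0]; rewrite HK.2 // HN.1.1 -HK.2 // Kw0 (bilin0l HM.1).
Qed.

Lemma kerK_perp_subspace K : subspace (kerK_perp M V K).
Proof.
split; first by split; [exact: HV.1 | move=> w _; rewrite (bilin0l HM.1)].
move=> a x y [Vx Hx] [Vy Hy]; split; first exact: HV.2.
by move=> w Kw; rewrite HM.1.2 Hx // Hy // mulr0 addr0.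
Qed.

End Riesz.

Section Eigen.
Variables (R : realType) (T : lmodType R) (M N : T -> T -> R) (W : T -> Prop).
Hypotheses (HM : inner_product M) (HN : psd_form N) (HW : subspace W).

Lemma eigspace_subspace mu : subspace (eigspace M N W mu).
Proof.
split.
  split; first exact: HW.1.
  by move=> v _; rewrite (bilin0l HM.1) (bilin0l HN.1) mulr0.
move=> a x y [Wx Hx] [Wy Hy]; split; first exact: HW.2.
by move=> v Wv; rewrite HM.1.2 HN.1.2 Hx // Hy //; ring.
Qed.

Lemma eigspace_N_orth mu nu x y : eigspace M N W mu x -> eigspace M N W nu y ->
  mu != nu -> N x y = 0.
Proof.
move=> [Wx Hx] [Wy Hy] mu_neq_nu.
have : (mu - nu) * N x y = 0 by rewrite mulrBl -Hx // HM.1.1 Hy // HN.1.1 subrr.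
by move/eqP; rewrite mulf_eq0 subr_eq0 (negbTE mu_neq_nu) => /eqP.
Qed.

Lemma eigspace_M_orth mu nu x y : eigspace M N W mu x -> eigspace M N W nu y ->
  mu != nu -> M x y = 0.
Proof.
move=> Ex Ey mu_neq_nu.
by rewrite Ex.2; [rewrite (eigspace_N_orth Ex Ey mu_neq_nu) mulr0 | exact: Ey.1].
Qed.

Lemma eigval_gt0 mu : is_eigval M N W mu -> 0 < mu.
Proof.
move=> [u [u_neq0 [Wu Hu]]].
have := HM.2 u u_neq0; rewrite Hu //.
by apply: contraTT; rewrite -!leNgt => mu_le0; apply: mulr_le0_ge0 => //; exact: HN.2.
Qed.

(* Eigenvectors for distinct eigenvalues are [N]-orthogonal, so on their span
   [alpha M + beta N] is the [N]-form of the vector rescaled by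
   [sqrt (alpha mu_i + beta)] along each eigenvector. *)
Lemma eig_comb_form_ge0 p (e : 'I_p -> T) (mu c : 'I_p -> R) alpha beta :
  (forall i, eigspace M N W (mu i) (e i)) -> (forall i, 0 <= alpha * mu i + beta) ->
  0 <= alpha * M (\sum_i c i *: e i) (\sum_i c i *: e i)
       + beta * N (\sum_i c i *: e i) (\sum_i c i *: e i).
Proof.
move=> He Hpos; set x := \sum_i c i *: e i.
pose s i := Num.sqrt (alpha * mu i + beta).
suff -> : alpha * M x x + beta * N x x =
          N (\sum_i (s i * c i) *: e i) (\sum_i (s i * c i) *: e i) by exact: HN.2.
rewrite !(bilin_comb HM.1) !(bilin_comb HN.1) !big_distrr -big_split /=.
apply: eq_bigr => i _; rewrite !big_distrr -big_split /=.
apply: eq_bigr => j _; rewrite (He i).2; last exact: (He j).1.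
have [mu_ij|mu_ij] := eqVneq (mu i) (mu j); last first.
  by rewrite (eigspace_N_orth (He i) (He j) mu_ij); ring.
have -> : s j = s i by rewrite /s mu_ij.
have s2 : s i ^+ 2 = alpha * mu i + beta by rewrite sqr_sqrtr.
transitivity (c i * c j * N (e i) (e j) * (alpha * mu i + beta)); first by ring.
by rewrite -s2; ring.
Qed.

Lemma eig_comb_le p (e : 'I_p -> T) (mu c : 'I_p -> R) L :
  (forall i, eigspace M N W (mu i) (e i)) -> (forall i, mu i <= L) ->
  M (\sum_i c i *: e i) (\sum_i c i *: e i)
  <= L * N (\sum_i c i *: e i) (\sum_i c i *: e i).
Proof.
move=> He HL.
have /(eig_comb_form_ge0 c He) : forall i, 0 <= -1 * mu i + L.
  by move=> i; rewrite mulN1r addrC subr_ge0.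
lra.
Qed.

Lemma eig_comb_ge p (e : 'I_p -> T) (mu c : 'I_p -> R) L :
  (forall i, eigspace M N W (mu i) (e i)) -> (forall i, L <= mu i) ->
  L * N (\sum_i c i *: e i) (\sum_i c i *: e i)
  <= M (\sum_i c i *: e i) (\sum_i c i *: e i).
Proof.
move=> He HL.
have /(eig_comb_form_ge0 c He) : forall i, 0 <= 1 * mu i + - L.
  by move=> i; rewrite mul1r subr_ge0.
lra.
Qed.

Lemma eig_comb_block_eq0 p (e : 'I_p -> T) (mu c : 'I_p -> R) nu :
  (forall i, eigspace M N W (mu i) (e i)) -> \sum_i c i *: e i = 0 ->
  \sum_(i | mu i == nu) c i *: e i = 0.
Proof.
move=> He Hsum; set w := \sum_(i | _) _.
have Ew : eigspace M N W nu w.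
  apply: subspace_sum; first exact: eigspace_subspace.
  by move=> i /eqP <-; apply: subspaceZ; [exact: eigspace_subspace | exact: He].
apply: (inner_product_eq0 HM).
have : M w (\sum_i c i *: e i) = 0 by rewrite Hsum HM.1.1 (bilin0l HM.1).
rewrite (bigID (fun i => mu i == nu)) /= (bilinDr HM.1) -/w => <-.
rewrite [X in _ = _ + X](bilin_sumr HM.1) big1 ?addr0 // => i mu_neq_nu.
by rewrite (bilinZr HM.1) (eigspace_M_orth Ew (He i)) ?mulr0 // eq_sym.
Qed.

End Eigen.

Lemma ltd_le k j d : ltd j d -> (k <= j)%N -> ltd k d.
Proof. by case: d => //= m j_lt_m k_le_j; apply: leq_ltn_trans k_le_j j_lt_m. Qed.

Section EqRank.
Variables (A : eqType) (s : nat -> A).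

Definition eq_rank j := count (fun i => s i == s j) (iota 0 j).

Lemma eq_rank_lt i j : (i < j)%N -> s i = s j -> (eq_rank i < eq_rank j)%N.
Proof.
move=> /subnKC <- s_ij.
rewrite /eq_rank -s_ij addSnnS iotaD count_cat /= add0n eqxx.
by rewrite add1n addnS ltnS leq_addr.
Qed.

Lemma eq_rank_inj i j : s i = s j -> eq_rank i = eq_rank j -> i = j.
Proof.
move=> s_ij r_ij; case: (ltngtP i j) => // [lt_ij|lt_ji].
  by have := eq_rank_lt lt_ij s_ij; rewrite r_ij ltnn.
by have := eq_rank_lt lt_ji (esym s_ij); rewrite r_ij ltnn.
Qed.

Lemma eq_rank_lt_card d m j : ltd j d ->
  card_eq (fun k => ltd k d /\ s k = s j) m -> (eq_rank j < m)%N.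
Proof.
move=> jd [r [r_uniq [<- Hr]]].
have -> : eq_rank j = (count (fun i => s i == s j) (iota 0 j.+1)).-1.
  by rewrite -addn1 iotaD count_cat /= eqxx addn1.
rewrite -size_filter; set r' := filter _ _.
have r'_gt0 : (0 < size r')%N.
  by rewrite size_filter -has_count; apply/hasP; exists j; rewrite ?mem_iota ?ltnSn.
have : (size r' <= size r)%N.
  apply: uniq_leq_size; first by rewrite filter_uniq // iota_uniq.
  move=> i; rewrite mem_filter mem_iota add0n => /andP [/eqP s_ij i_le_j].
  by apply/Hr; split => //; apply: ltd_le jd _; rewrite -ltnS.
by case: (size r') r'_gt0.
Qed.

End EqRank.

Lemma lin_indep_reindex (R : realType) (T : lmodType R) m p (g : 'I_m -> T)
    (sigma : 'I_p -> 'I_m) (A : pred 'I_p) (c : 'I_p -> R) :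
  lin_indep g -> {in A &, injective sigma} ->
  \sum_(j | A j) c j *: g (sigma j) = 0 -> forall j, A j -> c j = 0.
Proof.
move=> g_indep sigma_inj Hsum j Aj.
pose b o := \sum_(i | A i && (sigma i == o)) c i.
have /g_indep/(_ (sigma j)) : \sum_o b o *: g o = 0.
  rewrite -[X in _ = X]Hsum (partition_big sigma predT) //=; apply: eq_bigr => o _.
  by rewrite scaler_suml; apply: eq_bigr => i /andP [_ /eqP ->].
rewrite /b (big_pred1 j) // => i /=; apply/andP/eqP => [[Ai /eqP]|->]; last by rewrite Aj.
exact: sigma_inj.
Qed.

Section EigEnum.
Variables (R : realType) (T : lmodType R) (M N : T -> T -> R) (W : T -> Prop).
Variables (lam : nat -> R) (d : option nat).
Hypotheses (HM : inner_product M) (HN : psd_form N) (HW : subspace W).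
Hypothesis Henum : eig_enum M N W lam d.

Lemma eig_enum_bases : exists (m : R -> nat) (g : R -> nat -> T),
  forall mu, is_eigval M N W mu ->
  [/\ card_eq (fun k => ltd k d /\ lam k = mu) (m mu),
      forall i, (i < m mu)%N -> eigspace M N W mu (g mu i) &
      lin_indep (fun i : 'I_(m mu) => g mu i)].
Proof.
have : forall mu, exists mg : nat * (nat -> T), is_eigval M N W mu ->
  [/\ card_eq (fun k => ltd k d /\ lam k = mu) mg.1,
      forall i, (i < mg.1)%N -> eigspace M N W mu (mg.2 i) &
      lin_indep (fun i : 'I_mg.1 => mg.2 i)].
  move=> mu; case: (boolp.pselect (is_eigval M N W mu)); last first.
    by move=> not_eig; exists (0%N, fun _ => 0).
  move=> /Henum.2.2 [m [[[g [Eg g_indep]] _] Hcard]].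
  exists (m, fun i => if insub i is Some o then g o else 0) => _; split => //=.
    by move=> i lt_im; rewrite insubT; exact: Eg.
  move=> c; rewrite (eq_bigr (fun i => c i *: g i)); first exact: g_indep.
  by move=> i _; rewrite valK.
case/boolp.choice => mg Hmg.
by exists (fun mu => (mg mu).1), (fun mu => (mg mu).2).
Qed.

(* f j is the (eq_rank lam (a + j))-th vector of a basis of the eigenspace of
   lam (a + j): distinct indices with the same eigenvalue get distinct basis
   vectors, and eigenspaces of distinct eigenvalues are M-orthogonal. *)
Lemma eig_enum_indep a p : (forall j, (j < p)%N -> ltd (a + j) d) ->
  exists f : 'I_p -> T,
    (forall j : 'I_p, eigspace M N W (lam (a + j)) (f j)) /\ lin_indep f.
Proof.
move=> Hd; have [m [g Hg]] := eig_enum_bases.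
have Hev (j : 'I_p) := Hg _ (Henum.1 _ (Hd _ (ltn_ord j))).
have rank_lt (j : 'I_p) : (eq_rank lam (a + j) < m (lam (a + j)))%N.
  by have [Hcard _ _] := Hev j; exact: eq_rank_lt_card (Hd _ (ltn_ord j)) Hcard.
pose f (j : 'I_p) := g (lam (a + j)) (eq_rank lam (a + j)).
have Ef (j : 'I_p) : eigspace M N W (lam (a + j)) (f j).
  by have [_ Eg _] := Hev j; exact: Eg.
exists f; split => // c Hc j0.
set nu := lam (a + j0); have [_ _ g_indep] := Hev j0.
pose sigma (j : 'I_p) : 'I_(m nu) :=
  insubd (Ordinal (rank_lt j0)) (eq_rank lam (a + j)).
have sigmaE (j : 'I_p) : lam (a + j) = nu -> sigma j = eq_rank lam (a + j) :> nat.
  by move=> lam_j; have := rank_lt j; rewrite lam_j val_insubd => ->.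
apply: (lin_indep_reindex g_indep (sigma := sigma) (A := fun j => lam (a + j) == nu)).
- move=> i j; rewrite !unfold_in => /eqP lam_i /eqP lam_j /(congr1 (@nat_of_ord _)).
  rewrite !sigmaE // => rank_ij; apply/val_inj/(@addnI a).
  by apply: (eq_rank_inj _ rank_ij); rewrite lam_i lam_j.
- rewrite -[X in _ = X](eig_comb_block_eq0 HM HN HW nu Ef Hc).
  apply: eq_bigr => j /eqP lam_j.
  by rewrite /f sigmaE // lam_j.
- exact: eqxx.
Qed.

End EigEnum.

Lemma dim_eq_span_meet (R : realType) (T : lmodType R) (S : T -> Prop) n p q
    (s : 'I_p -> T) (e : 'I_q -> T) :
  dim_eq S n -> (p + q = n.+1)%N -> (forall i, S (s i)) -> (forall j, S (e j)) ->
  lin_indep e ->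
  exists (a : 'I_p -> R) (b : 'I_q -> R),
    (exists i, a i != 0) /\ \sum_i a i *: s i = \sum_j b j *: e j.
Proof.
move=> [_ no_indep] pq_eq Ss Se e_indep.
pose F i := match split i with inl i' => s i' | inr j => e j end.
have [c [Fc_eq0 [i1 ci1_neq0]]] :
    exists c, \sum_i c i *: F i = 0 /\ exists i, c i != 0.
  apply: boolp.contrapT => no_rel; apply: no_indep; rewrite -pq_eq.
  exists F; split; first by move=> i; rewrite /F; case: split.
  move=> c Fc_eq0 i; have [//|ci_neq0] := eqVneq (c i) 0.
  by case: no_rel; exists c; split => //; exists i.
have sum_split : \sum_i c (lshift q i) *: s i + \sum_j c (rshift p j) *: e j = 0.
  rewrite -[X in _ = X]Fc_eq0 big_split_ord /=.
  congr (_ + _); apply: eq_bigr => i _; rewrite /F.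
    by rewrite (unsplitK (inl i) : split (lshift q i) = _).
  by rewrite (unsplitK (inr i) : split (rshift p i) = _).
exists (fun i => c (lshift q i)), (fun j => - c (rshift p j)); split; last first.
  have -> : \sum_j - c (rshift p j) *: e j = - \sum_j c (rshift p j) *: e j.
    by rewrite -sumrN; apply: eq_bigr => j _; rewrite scaleNr.
  by apply/eqP; rewrite -addr_eq0 sum_split.
apply: boolp.contrapT => a_eq0.
have c_l i : c (lshift q i) = 0.
  by have [//|ci_neq0] := eqVneq (c (lshift q i)) 0; case: a_eq0; exists i.
have c_r : forall j, c (rshift p j) = 0.
  by apply: e_indep; move: sum_split; rewrite big1 ?add0r // => i _; rewrite c_l scale0r.
move: ci1_neq0; rewrite -(splitK i1).
by case: (split i1) => [i|j] /=; rewrite ?c_l ?c_r eqxx.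
Qed.

Lemma bnorm_le_sqr (R : realType) (T : lmodType R) (M N : T -> T -> R) C x :
  0 <= M x x -> 0 <= C -> bnorm N x <= C * bnorm M x -> N x x <= C ^+ 2 * M x x.
Proof.
move=> M_ge0 C_ge0; rewrite /bnorm -[C in C * _]ger0_norm // -sqrtr_sqr.
by rewrite -sqrtrM ?sqr_ge0 // ler_sqrt // mulr_ge0 ?sqr_ge0.
Qed.

Section RayleighBounds.
Variables (R : realType) (T : lmodType R) (M N : T -> T -> R).
Hypotheses (HM : inner_product M) (HN : psd_form N).

(* With G = M(K v, K v) = N(v, K v) and A = N(v, v) = M(K v, v),
   Cauchy-Schwarz gives G^2 <= A N(K v, K v) <= A G / L and A^2 <= G M(v, v). *)
Lemma is_K_rayleigh_ge V K L v : is_K M N V K -> V v -> 0 < L ->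
  L * N (K v) (K v) <= M (K v) (K v) -> L * N v v <= M v v.
Proof.
move=> HK Vv L_gt0; have VKv := HK.1 v Vv; set g := K v in VKv *.
rewrite (HK.2 v g Vv VKv) => HKv.
have CS_N := bilin_cauchy_schwarz HN.1 HN.2 v g.
have CS_M := bilin_cauchy_schwarz HM.1 (inner_product_ge0 HM) g v.
rewrite (HK.2 v v Vv Vv) (HK.2 v g Vv VKv) in CS_M.
have G_ge0 : 0 <= N v g by rewrite -(HK.2 v g Vv VKv) inner_product_ge0.
have A_ge0 := HN.2 v; have X_ge0 := inner_product_ge0 HM v.
have LG_le_A : L * N v g <= N v v.
  have [->|G_neq0] := eqVneq (N v g) 0; first by rewrite mulr0.
  have G_gt0 : 0 < N v g by rewrite lt0r G_neq0.
  by rewrite -(ler_pM2l G_gt0); nra.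
have [->|A_neq0] := eqVneq (N v v) 0; first by rewrite mulr0.
have A_gt0 : 0 < N v v by rewrite lt0r A_neq0.
by rewrite -(ler_pM2l A_gt0); nra.
Qed.

(* Young's inequality for N with weight t = C^2 Lh yields
   Lh N(v + w, v + w) <= (1 + t) M(v + w, v + w). *)
Lemma eigval_lower_bound_of_split L Lh C v w :
  0 < Lh -> 0 < C -> v + w != 0 -> M v w = 0 ->
  M (v + w) (v + w) <= L * N (v + w) (v + w) ->
  Lh * N v v <= M v v -> N w w <= C ^+ 2 * M w w ->
  Lh / (1 + C ^+ 2 * Lh) <= L.
Proof.
move=> Lh_gt0 C_gt0 vw_neq0 Mvw0 Hu Hv Hw; set t := C ^+ 2 * Lh.
have t_gt0 : 0 < t by rewrite mulr_gt0 ?exprn_gt0.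
have Mu_gt0 := HM.2 _ vw_neq0.
have Mu_split : M (v + w) (v + w) = M v v + M w w.
  by rewrite (bilin_sqrD HM.1) Mvw0 mulr0 addr0.
have young := bilin_young HN.1 HN.2 v w t_gt0.
have young_w : Lh * ((1 + t^-1) * N w w) <= (1 + t) * M w w.
  have -> : 1 + t = Lh * ((1 + t^-1) * C ^+ 2).
    by rewrite /t; field; rewrite !gt_eqF.
  by rewrite -mulrA ler_pM2l // -mulrA ler_pM2l ?addr_gt0 ?invr_gt0.
have HNu : Lh * N (v + w) (v + w) <= (1 + t) * M (v + w) (v + w).
  by rewrite Mu_split; nra.
have L_gt0 : 0 < L by have := HN.2 (v + w); nra.
have Lh_le : Lh <= L * (1 + t) by rewrite -(ler_pM2r Mu_gt0); nra.
by rewrite ler_pdivrMr ?addr_gt0 // mulrC.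
Qed.

End RayleighBounds.


Theorem theorem2p4 (R : realType) (T : lmodType R) (M N : T -> T -> R)
  (V Vh : T -> Prop) (K Kh : T -> T) (P : T -> T)
  (d : option nat) (n : nat) (lam lamh : nat -> R) (Ch : R) :
  hilbert M -> psd_form N -> compact_wrt N M ->
  closed_subspace M V -> closed_subspace M Vh -> finite_dim Vh ->
  is_K M N V K -> is_K M N Vh Kh ->
  dim_ext (kerK_perp M V K) d -> eig_enum M N (kerK_perp M V K) lam d ->
  dim_eq (kerK_perp M Vh Kh) n -> eig_enum M N (kerK_perp M Vh Kh) lamh (Some n) ->
  is_Mproj M Vh P ->
  0 < Ch ->
  (forall u, V u -> bnorm N (u - P u) <= Ch * bnorm M (u - P u)) ->
  forall k : nat, (k < n)%N -> ltd k d ->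
    lamh k / (1 + Ch ^+ 2 * lamh k) <= lam k.
Proof.
move=> [HM _] HN _ [HV _] [HVh _] _ _ HKh _ Heig Hdimh Heigh HP Ch_gt0 HCh k k_lt_n kd.
have lamh_k_gt0 := eigval_gt0 HM HN (Heigh.1 k k_lt_n).
have lamh_ge j : (j < n - k)%N -> ltd (k + j) (Some n) by rewrite /= -ltn_subRL.
have [u [Eu u_indep]] := eig_enum_indep HM HN (kerK_perp_subspace HM HV K) Heig
  (a := 0) (p := k.+1) (fun j j_le_k => ltd_le kd j_le_k).
have [e [Ee e_indep]] := eig_enum_indep HM HN (kerK_perp_subspace HM HVh Kh) Heigh
  (a := k) (p := n - k) lamh_ge.
have [a [b [[i0 ai0_neq0] Hab]]] := dim_eq_span_meet
  (s := fun i => Kh (P (u i))) (e := e) Hdimh (ltac:(by rewrite addSn subnKC // ltnW))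
  (fun i => is_K_perp HM HN HKh (HP (u i)).1) (fun j => (Ee j).1) e_indep.
pose x := \sum_i a i *: u i.
have Vx : V x by apply: subspace_comb => // i; exact: (Eu i).1.1.
have KPx : Kh (P x) = \sum_j b j *: e j.
  by rewrite (Mproj_comb HM HVh) // (is_K_comb HM HN HVh _ HKh) // => i; exact: (HP _).1.
apply: (eigval_lower_bound_of_split HM HN (v := P x) (w := x - P x)) => //.
- by rewrite addrC subrK; apply: contra_neq ai0_neq0 => /u_indep; exact.
- by rewrite HM.1.1; exact: (HP x).2 _ (HP x).1.
- rewrite addrC subrK /x; apply: (eig_comb_le (L := lam k) HM HN a Eu) => i.
  by apply: Heig.2.1 kd _; rewrite add0n -ltnS ltn_ord.
- apply: (is_K_rayleigh_ge HM HN HKh (HP x).1) => //.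
  rewrite KPx; apply: (eig_comb_ge (L := lamh k) HM HN b Ee) => j.
  exact: Heigh.2.1 k (k + j) (lamh_ge _ (ltn_ord j)) (leq_addr _ _).
- exact: bnorm_le_sqr (inner_product_ge0 HM _) (ltW Ch_gt0) (HCh x Vx).
Qed.
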